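(* Let $A^1,\dots,A^d\in\mathbb{C}^{D\times D}$ define an injective matrix product state tensor, let $o$ be an operator on $(\mathbb{C}^d)^{\otimes k}$ with matrix elements $o^{i_1\cdots i_k}_{j_1\cdots j_k}=\bra{i_1\cdots i_k}o\ket{j_1\cdots j_k}$, and let $\epsilon\in\mathbb{C}$. Suppose two families of matrices $B^{i_1\cdots i_{k-1}},\tilde B^{i_1\cdots i_{k-1}}\in\mathbb{C}^{D\times D}$ (indexed by $(i_1,\dots,i_{k-1})\in\{1,\dots,d\}^{k-1}$) both satisfy, for all $i_1,\dots,i_k$, $$\sum_{j_1,\dots,j_k}\Big(o^{i_1\cdots i_k}_{j_1\cdots j_k}-\epsilon\,\delta_{i_1j_1}\cdots\delta_{i_kj_k}\Big)A^{j_1}\cdots A^{j_k}=A^{i_1}C^{i_2\cdots i_k}-C^{i_1\cdots i_{k-1}}A^{i_k}$$ with $C=B$ and with $C=\tilde B$ respectively. Then there exists $\lambda\in\mathbb{C}$ such that $\tilde B^{i_1\cdots i_{k-1}}=B^{i_1\cdots i_{k-1}}+\lambda\,A^{i_1}\cdots A^{i_{k-1}}$ for all $i_1,\dots,i_{k-1}$.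
   Context: For $M\ge1$ define $\Gamma_M:\mathbb{C}^{D\times D}\to(\mathbb{C}^d)^{\otimes M}$, $\Gamma_M(X)=\sum_{i_1,\dots,i_M}\operatorname{Tr}(XA^{i_1}\cdots A^{i_M})\ket{i_1\cdots i_M}$. The tensor $A$ is injective if $\Gamma_M$ is injective for some $M$. *)

From HB Require Import structures.
From mathcomp Require Import all_boot all_order all_algebra.
From mathcomp Require Import reals.
From mathcomp.real_closed Require Import complex.
Set Implicit Arguments. Unset Strict Implicit. Unset Printing Implicit Defensive.
Import Order.TTheory GRing.Theory Num.Theory.
Local Open Scope ring_scope.

Section MPS.
Variables (F : fieldType) (d D : nat).

Definition mxprod (A : 'I_d -> 'M[F]_D) (s : seq 'I_d) : 'M[F]_D :=
  foldr (fun i M => A i *m M) 1%:M s.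

(* Gamma_M(X) = sum_{i_1..i_M} Tr(X A^{i_1}...A^{i_M}) |i_1...i_M>,
   represented by its coordinate function on basis vectors |i_1..i_M>. *)
Definition Gamma (A : 'I_d -> 'M[F]_D) (M : nat) (X : 'M[F]_D)
  : {ffun M.-tuple 'I_d -> F} :=
  [ffun i : M.-tuple 'I_d => \tr (X *m mxprod A i)].

Definition mps_injective (A : 'I_d -> 'M[F]_D) : Prop :=
  exists M : nat, (0 < M)%N /\ injective (Gamma A M).

Definition tfirst n (t : n.+1.-tuple 'I_d) : n.-tuple 'I_d :=
  [tuple tnth t (widen_ord (leqnSn n) j) | j < n].
Definition tlast n (t : n.+1.-tuple 'I_d) : n.-tuple 'I_d :=
  [tuple tnth t (lift ord0 j) | j < n].

(* The equation of the statement, with k = n.+1 sites. o i j = <i|o|j>. *)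
Definition solves_eq n (A : 'I_d -> 'M[F]_D)
  (o : n.+1.-tuple 'I_d -> n.+1.-tuple 'I_d -> F) (eps : F)
  (C : n.-tuple 'I_d -> 'M[F]_D) : Prop :=
  forall i : n.+1.-tuple 'I_d,
    \sum_(j : n.+1.-tuple 'I_d) (o i j - eps * (i == j)%:R) *: mxprod A j
    = A (tnth i ord0) *m C (tlast i) - C (tfirst i) *m A (tnth i ord_max).

End MPS.

From HB Require Import structures.
From mathcomp Require Import all_boot all_order all_algebra.
From mathcomp Require Import reals.
From mathcomp.real_closed Require Import complex.
Import Order.TTheory GRing.Theory Num.Theory.
Local Open Scope ring_scope.
Set Implicit Arguments. Unset Strict Implicit.

(* Subtracting the two equations, Delta := Bt - B satisfies
   A^{i_1} Delta(i_2..i_k) = Delta(i_1..i_{k-1}) A^{i_k}.  If Gamma_M is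
   injective, then by trace duality the products of L letters span all
   D x D matrices whenever L is a multiple of M; pick such an L >= k - 1 and
   write 1 = sum_w c_w A^w over words of length L.  Extending Delta to longer
   words by Delta(w) := Delta(w_1..w_{k-1}) A^{w_k} ... A^{w_|w|}, the
   relation makes Delta compatible with multiplication by products on both
   sides, so X := sum_w c_w Delta(w) satisfies X A^s = Delta(s) = A^s X for
   every word s of length >= k - 1.  Hence X commutes with every matrix,
   X = lam 1, and Delta(t) = X A^t = lam A^t. *)

Lemma central_mx_scalar (F : fieldType) (D : nat) (X : 'M[F]_D) :
  (forall Y : 'M[F]_D, Y *m X = X *m Y) -> exists lam, X = lam%:M.
Proof.
case: D X => [|D] X XC; first by exists 0; apply/matrixP => [[]].
exists (X 0 0); apply/matrixP => i j; rewrite mxE.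
move/matrixP/(_ i 0): (XC (delta_mx j 0)); rewrite !mxE.
rewrite (bigD1 0) //= big1 => [|k /negPf k0]; last first.
  by rewrite mxE k0 andbF mul0r.
rewrite (bigD1 j) //= big1 => [|k /negPf kj]; last first.
  by rewrite mxE kj mulr0.
rewrite !mxE !eqxx !andbT !addr0 mulr1 => <-.
by case: (i == j); rewrite ?mul1r ?mul0r.
Qed.

Lemma mxvec_dotE (F : fieldType) (D : nat) (X Y : 'M[F]_D) :
  \sum_j mxvec X 0 j * mxvec Y 0 j = \tr (X^T *m Y).
Proof.
rewrite (reindex _ (curry_mxvec_bij _ _)) /=.
transitivity (\sum_i \sum_j X i j * Y i j).
  by rewrite pair_big /=; apply: eq_bigr => [[i j]] _; rewrite !mxvecE.
rewrite /mxtrace exchange_big /=; apply: eq_bigr => i _; rewrite mxE.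
by apply: eq_bigr => j _; rewrite !mxE.
Qed.

Section Words.
Variables (F : fieldType) (d D : nat) (A : 'I_d -> 'M[F]_D).
Local Notation P := (mxprod A).

Lemma mxprod_cat s1 s2 : P (s1 ++ s2) = P s1 *m P s2.
Proof. by elim: s1 => [|a s IH] /=; rewrite ?mul1mx // IH mulmxA. Qed.

Lemma val_tlast n (t : n.+1.-tuple 'I_d) : val (tlast t) = behead t.
Proof.
apply: (@eq_from_nth _ (tnth t ord0)) => [|i].
  by rewrite size_tuple size_behead size_tuple.
rewrite size_tuple => lt_in; rewrite nth_behead.
rewrite -[nth _ _ i]/(nth _ (tlast t) (Ordinal lt_in)) -tnth_nth tnth_mktuple.
by rewrite (tnth_nth (tnth t ord0)).
Qed.

Lemma val_tfirst n (t : n.+1.-tuple 'I_d) : val (tfirst t) = take n t.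
Proof.
apply: (@eq_from_nth _ (tnth t ord0)) => [|i].
  by rewrite size_tuple size_take size_tuple ltnSn.
rewrite size_tuple => lt_in; rewrite nth_take //.
rewrite -[nth _ _ i]/(nth _ (tfirst t) (Ordinal lt_in)) -tnth_nth tnth_mktuple.
by rewrite (tnth_nth (tnth t ord0)).
Qed.

Definition trace_separating L := forall X : 'M[F]_D,
  (forall w : L.-tuple 'I_d, \tr (X *m P w) = 0) -> X = 0.

Definition words_span L := forall Y : 'M[F]_D,
  exists c : L.-tuple 'I_d -> F, Y = \sum_w c w *: P w.

Lemma mps_injective_separating :
  mps_injective A -> exists2 M, (0 < M)%N & trace_separating M.
Proof.
case=> M [M_gt0 injG]; exists M => // X XP; apply: injG.
by apply/ffunP => w; rewrite !ffunE XP mul0mx mxtrace0.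
Qed.

Lemma trace_separatingD a b :
  trace_separating a -> trace_separating b -> trace_separating (a + b).
Proof.
move=> sep_a sep_b X XP; apply: sep_b => v.
suff PvX : P v *m X = 0 by rewrite mxtrace_mulC PvX mxtrace0.
apply: sep_a => u; rewrite mxtrace_mulC mulmxA -mxprod_cat mxtrace_mulC.
exact: (XP [tuple of u ++ v]).
Qed.

Lemma trace_separatingMn k M :
  trace_separating M -> trace_separating (k.+1 * M).
Proof.
move=> sep_M; elim: k => [|k IH]; first by rewrite mul1n.
by rewrite mulSn; apply: trace_separatingD.
Qed.

Lemma mps_injective_separating_ge m :
  mps_injective A -> exists2 L, (m <= L)%N & trace_separating L.
Proof.
case/mps_injective_separating => M M_gt0 sep_M.
exists (m.+1 * M)%N; last exact: trace_separatingMn.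
by rewrite (leq_trans (leqnSn m)) // leq_pmulr.
Qed.

Lemma trace_separating_span L : trace_separating L -> words_span L.
Proof.
move=> sep_L Y.
pose S := \matrix_(k < #|{: L.-tuple 'I_d}|) mxvec (P (enum_val k)).
have free_St : row_free S^T.
  apply: inj_row_free => u uS0; rewrite -[u]vec_mxK.
  suff -> : vec_mx u = 0 by rewrite linear0.
  apply/eqP; rewrite -trmx_eq0; apply/eqP/sep_L => w.
  rewrite -mxvec_dotE vec_mxK.
  transitivity ((u *m S^T) 0 (enum_rank w)); last by rewrite uS0 mxE.
  by rewrite mxE; apply: eq_bigr => j _; rewrite !mxE enum_rankK.
have /submxP[c Yc] : (mxvec Y <= S)%MS.
  by rewrite submx_full // /row_full -mxrank_tr.
exists (fun w => c 0 (enum_rank w)); apply: (can_inj mxvecK).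
rewrite Yc mulmx_sum_row linear_sum.
rewrite [RHS](reindex _ (onW_bij _ (enum_val_bij _))).
by apply: eq_bigr => k _; rewrite linearZ enum_valK rowK.
Qed.

Section Extension.
Variables (n : nat) (Delta : n.-tuple 'I_d -> 'M[F]_D).
Hypothesis Delta_shift : forall i : n.+1.-tuple 'I_d,
  A (tnth i ord0) *m Delta (tlast i) = Delta (tfirst i) *m A (tnth i ord_max).

(* Junk value 0 on words whose length is not n. *)
Definition Dseq (s : seq 'I_d) : 'M[F]_D :=
  if insub s is Some t then Delta t else 0.

Definition Dext (w : seq 'I_d) : 'M[F]_D := Dseq (take n w) *m P (drop n w).

Lemma DseqE (t : n.-tuple 'I_d) : Dseq t = Delta t.
Proof. by rewrite /Dseq valK. Qed.

Lemma DextE (t : n.-tuple 'I_d) : Dext t = Delta t.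
Proof.
by rewrite /Dext take_oversize ?drop_oversize ?size_tuple // mulmx1 DseqE.
Qed.

Lemma Dseq_shift a w : size w = n ->
  A a *m Dseq w = Dseq (belast a w) *m A (last a w).
Proof.
move=> size_w; have size_aw : size (a :: w) == n.+1 by rewrite /= size_w.
have := Delta_shift (Tuple size_aw).
have take_aw : take n (a :: w) = belast a w.
  by rewrite lastI -cats1 take_size_cat ?size_belast.
rewrite -!DseqE val_tlast val_tfirst (tnth_nth a) (tnth_nth a) /= => ->.
by rewrite take_aw (last_nth a) size_w.
Qed.

Lemma Dext_catr w v : (n <= size w)%N -> Dext (w ++ v) = Dext w *m P v.
Proof.
move=> le_n_w; rewrite /Dext takel_cat // -mulmxA -mxprod_cat; congr (_ *m P _).
by rewrite -{1}(cat_take_drop n w) -catA drop_size_cat // size_takel.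
Qed.

Lemma Dext_cons a w : (n <= size w)%N -> A a *m Dext w = Dext (a :: w).
Proof.
move=> le_n_w; set s := take n w.
have size_s : size s = n by rewrite size_takel.
have -> : a :: w = belast a s ++ last a s :: drop n w.
  by rewrite -cat_rcons -lastI /= cat_take_drop.
by rewrite /Dext mulmxA Dseq_shift // take_size_cat ?drop_size_cat ?size_belast
  // -mulmxA.
Qed.

Lemma Dext_catl u w : (n <= size w)%N -> P u *m Dext w = Dext (u ++ w).
Proof.
move=> le_n_w; elim: u => [|a u IH] /=; first by rewrite mul1mx.
by rewrite -mulmxA IH Dext_cons // size_cat (leq_trans le_n_w) ?leq_addl.
Qed.

Lemma shift_relation_scalar L : trace_separating L -> (n <= L)%N ->
  exists lam, forall t, Delta t = lam *: P t.
Proof.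
move=> /trace_separating_span span_L le_n_L.
have [c1 one_c1] := span_L 1%:M.
have le_n_w (w : L.-tuple 'I_d) : (n <= size w)%N by rewrite size_tuple.
pose X := \sum_(w : L.-tuple 'I_d) c1 w *: Dext w.
have XP s : (n <= size s)%N -> X *m P s = Dext s.
  move=> le_n_s; rewrite -[Dext s]mul1mx one_c1 !mulmx_suml.
  by apply: eq_bigr => w _; rewrite -!scalemxAl Dext_catl // Dext_catr.
have PX s : (n <= size s)%N -> P s *m X = Dext s.
  move=> le_n_s; rewrite -[Dext s]mulmx1 one_c1 !mulmx_sumr.
  by apply: eq_bigr => w _; rewrite -!scalemxAr Dext_catl // Dext_catr.
have [lam X_lam] : exists lam, X = lam%:M.
  apply: central_mx_scalar => Y; have [c ->] := span_L Y.
  rewrite mulmx_suml mulmx_sumr; apply: eq_bigr => w _.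
  by rewrite -scalemxAl -scalemxAr XP // PX.
by exists lam => t; rewrite -DextE -XP ?size_tuple // X_lam mul_scalar_mx.
Qed.

End Extension.
End Words.

Lemma solves_eq_subr (F : fieldType) d D n (A : 'I_d -> 'M[F]_D)
    (o : n.+1.-tuple 'I_d -> n.+1.-tuple 'I_d -> F) (eps : F)
    (B Bt : n.-tuple 'I_d -> 'M[F]_D) :
  solves_eq A o eps B -> solves_eq A o eps Bt ->
  forall i : n.+1.-tuple 'I_d,
    A (tnth i ord0) *m (Bt \- B) (tlast i)
    = (Bt \- B) (tfirst i) *m A (tnth i ord_max).
Proof.
move=> hB hBt i; have := hBt i; rewrite hB /= mulmxBr mulmxBl.
set a := A _ *m B _; set b := B _ *m _.
set a' := A _ *m Bt _; set b' := Bt _ *m _.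
move=> E; rewrite -[a'](subrK b') -E.
by rewrite addrAC [a - b]addrC addrK addrC.
Qed.

Theorem theorem2 (R : realType) (d D n : nat)
  (A : 'I_d -> 'M[R[i]]_D)
  (o : n.+1.-tuple 'I_d -> n.+1.-tuple 'I_d -> R[i]) (eps : R[i])
  (B Bt : n.-tuple 'I_d -> 'M[R[i]]_D) :
  mps_injective A ->
  solves_eq A o eps B ->
  solves_eq A o eps Bt ->
  exists lam : R[i], forall t : n.-tuple 'I_d,
    Bt t = B t + lam *: mxprod A t.
Proof.
move=> injA hB hBt.
have [L le_n_L sep_L] := mps_injective_separating_ge n injA.
have [lam Hlam] := shift_relation_scalar (solves_eq_subr hB hBt) sep_L le_n_L.
by exists lam => t; rewrite -Hlam /= addrC subrK.
Qed.
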